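(* Let $H$ be a complete graph and let $\mathbf{E}=(E_0,E_1,E_2)$ be an ordered partition of $E(H)$. Let $M$ be a matching in $H$ with $M\subset E_0$ and $|M|<\lfloor\frac12|V(H)|\rfloor$, and let $X=V(H)-V(M)$. Then (1) if $E(H[X])\cap(E_0\cup E_1)\ne\emptyset$, then $H$ contains a good matching for $\mathbf{E}$ of order $|M|+1$; and (2) if $|E_H(V(M),X)\cap E_0|>|E_H(V(M),X)\cap E_2|$, then $H$ contains a good matching for $\mathbf{E}$ of order $|M|+1$.
   Context: An ordered partition $(E_0,E_1,E_2)$ of a set is a triple of pairwise disjoint (possibly empty) sets with that union. A matching $M$ is a good matching for $\mathbf{E}$ if $M\cap E_2=\emptyset$ and $|M\cap E_1|\le1$; the order of a matching is its number of edges. $V(M)$ is the set of endpoints of edges of $M$; for disjoint $A,B\subset V(H)$, $E_H(A,B)$ is the set of edges of $H$ with one end in $A$ and the other in $B$. *)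

From mathcomp Require Import all_boot.
Set Implicit Arguments. Unset Strict Implicit. Unset Printing Implicit Defensive.

(* The complete graph H on a finite vertex type T: its edges are all
   2-element subsets of T. *)
Definition Kedges (T : finType) : {set {set T}} := [set e : {set T} | #|e| == 2].

Definition is_matching (T : finType) (M : {set {set T}}) : bool :=
  (M \subset Kedges T) &&
  [forall e1 in M, forall e2 in M, (e1 != e2) ==> [disjoint e1 & e2]].

Definition ordered_partition (T : finType) (E0 E1 E2 : {set {set T}}) : Prop :=
  [/\ E0 :|: E1 :|: E2 = Kedges T,
      [disjoint E0 & E1], [disjoint E0 & E2] & [disjoint E1 & E2]].

Definition good_matching (T : finType) (E1 E2 M : {set {set T}}) : bool :=
  [&& is_matching M, M :&: E2 == set0 & #|M :&: E1| <= 1].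

Definition Vm (T : finType) (M : {set {set T}}) : {set T} := cover M.

Definition induced_edges (T : finType) (X : {set T}) : {set {set T}} :=
  [set e in Kedges T | e \subset X].

Definition cross_edges (T : finType) (A B : {set T}) : {set {set T}} :=
  [set e in Kedges T | (#|e :&: A| == 1) && (#|e :&: B| == 1)].

From mathcomp Require Import all_boot zify.
Set Implicit Arguments. Unset Strict Implicit. Unset Printing Implicit Defensive.

(* (1) An E0- or E1-edge inside the uncovered set X can simply be added to M.
   (2) Counting the cross edges at both ends of each edge of M, some edge uv of M
   sends more E0-edges into X than u and v together send E2-edges into X.  As
   |X| >= 2, this yields distinct x, y in X with ux in E0 and vy not in E2 (or the
   same with u and v exchanged); replacing uv by ux and vy gives a good matching,
   vy being its only edge that may lie in E1. *)

Section Matchings.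
Variable T : finType.
Implicit Types (e : {set T}) (M : {set {set T}}).

Lemma disjoints2 (a b : T) (A : {set T}) :
  [disjoint [set a; b] & A] = (a \notin A) && (b \notin A).
Proof. by rewrite disjoints_subset subUset !sub1set !inE. Qed.

Lemma cover_setU1 e M : cover (e |: M) = e :|: cover M.
Proof. by rewrite /cover bigcup_setU big_set1. Qed.

Lemma is_matchingE M : is_matching M = (M \subset Kedges T) && trivIset M.
Proof.
congr (_ && _); apply/forall_inP/trivIsetP => [H e1 e2 e1M e2M | H e1 e1M].
  by move/forall_inP/(_ e2 e2M)/implyP: (H e1 e1M).
by apply/forall_inP => e2 e2M; apply/implyP; apply: H.
Qed.

Lemma matching_edge_card M e : is_matching M -> e \in M -> #|e| = 2.
Proof. by case/andP => /subsetP sMK _ /sMK; rewrite inE => /eqP. Qed.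

Lemma card_cover_matching M : is_matching M -> #|cover M| = #|M|.*2.
Proof.
move=> HM; move: (HM); rewrite is_matchingE => /andP [_ /eqP <-].
rewrite -muln2 -sum_nat_const; apply: eq_bigr => e; exact: matching_edge_card.
Qed.

Lemma matching_setU1 M e : is_matching M -> #|e| = 2 -> [disjoint e & cover M] ->
  is_matching (e |: M) /\ #|e |: M| = #|M|.+1.
Proof.
move=> HM e2 deM; have M0 : set0 \notin M.
  by apply/negP => /(matching_edge_card HM); rewrite cards0.
move: HM; rewrite !is_matchingE => /andP [sMK tM].
have [teM eM] : trivIset (e |: M) /\ e \notin M.
  apply: trivIsetU1 => // f fM; apply: disjointWr deM; exact: bigcup_sup.
by rewrite subUset sub1set inE e2 eqxx sMK teM cardsU1 eM.
Qed.

Lemma good_matching_sub (E0 E1 E2 : {set {set T}}) M e :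
  [disjoint E0 & E1] -> [disjoint E0 & E2] -> is_matching M ->
  M \subset e |: E0 -> e \notin E2 -> good_matching E1 E2 M.
Proof.
move=> D01 D02 HM /subsetP sM eE2; rewrite /good_matching HM setI_eq0 /=.
have notE2 f : f \in M -> f \notin E2.
  by move/sM/setU1P => [-> // | fE0]; rewrite (disjointFr D02 fE0).
apply/andP; split.
  by rewrite disjoints_subset; apply/subsetP => f /notE2; rewrite inE.
rewrite -(cards1 e) subset_leq_card //; apply/subsetP => f /setIP [/sM fe fE1].
by rewrite inE; case/setU1P: fe => [-> // | fE0]; rewrite (disjointFr D01 fE0) in fE1.
Qed.

Lemma augment_by_free_edge (E0 E1 E2 : {set {set T}}) M e :
  [disjoint E0 & E1] -> [disjoint E0 & E2] -> is_matching M -> M \subset E0 ->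
  #|e| = 2 -> [disjoint e & cover M] -> e \notin E2 ->
  exists M', good_matching E1 E2 M' /\ #|M'| = #|M|.+1.
Proof.
move=> D01 D02 HM ME0 e2 deM eE2; have [HeM cardeM] := matching_setU1 HM e2 deM.
by exists (e |: M); split=> //; apply: good_matching_sub D01 D02 HeM _ eE2; rewrite setUS.
Qed.

Lemma augment_by_swap (E0 E1 E2 : {set {set T}}) M (u v x y : T) :
  [disjoint E0 & E1] -> [disjoint E0 & E2] -> is_matching M -> M \subset E0 ->
  [set u; v] \in M -> x \notin cover M -> y \notin cover M -> x != y ->
  [set u; x] \in E0 -> [set v; y] \notin E2 ->
  exists M', good_matching E1 E2 M' /\ #|M'| = #|M|.+1.
Proof.
move=> D01 D02 HM ME0 uvM xM yM xy uxE0 vyE2.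
have /andP [sMK tM] : (M \subset Kedges T) && trivIset M by rewrite -is_matchingE.
set M0 := M :\ [set u; v].
have HM0 : is_matching M0.
  by rewrite is_matchingE (subset_trans (subsetDl _ _) sMK) trivIsetD.
have cM0 : cover M0 = cover M :\: [set u; v] := coverD1 tM uvM.
have [uM vM] : u \in cover M /\ v \in cover M.
  by split; apply: (subsetP (bigcup_sup _ uvM)); rewrite !inE eqxx ?orbT.
have uv : u != v by have := matching_edge_card HM uvM; rewrite cards2; case: (u != v).
have [ux vx] : u != x /\ v != x by split; apply: contraNneq xM => <-.
have [uy vy] : u != y /\ v != y by split; apply: contraNneq yM => <-.
have [HM1 cM1] : is_matching ([set v; y] |: M0) /\ #|[set v; y] |: M0| = #|M0|.+1.
  apply: matching_setU1 HM0 _ _; first by rewrite cards2 vy.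
  by rewrite cM0 disjoints2 !inE eqxx orbT (negbTE yM) andbF.
have [HM2 cM2] : is_matching ([set u; x] |: ([set v; y] |: M0)) /\
    #|[set u; x] |: ([set v; y] |: M0)| = #|[set v; y] |: M0|.+1.
  apply: matching_setU1 HM1 _ _; first by rewrite cards2 ux.
  rewrite cover_setU1 cM0 disjoints2 !inE eqxx (negbTE xM) !andbF !orbF /=.
  by rewrite (eq_sym x v) (negbTE uv) (negbTE uy) (negbTE vx) (negbTE xy).
exists ([set u; x] |: ([set v; y] |: M0)); split.
- apply: good_matching_sub D01 D02 HM2 _ vyE2.
  rewrite setUCA setUS // subUset sub1set uxE0.
  exact: subset_trans (subsetDl _ _) ME0.
- by rewrite cM2 cM1 (cardsD1 [set u; v] M) uvM.
Qed.

End Matchings.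

Section CrossEdges.
Variable T : finType.
Implicit Types (V : {set T}) (E : {set {set T}}).

Definition nbhd E (w : T) : {set T} := [set x | [set w; x] \in E].

Lemma in_nbhd E (w x : T) : (x \in nbhd E w) = ([set w; x] \in E).
Proof. by rewrite inE. Qed.

Lemma set2_cross V (w x : T) : w \in V -> x \notin V ->
  [set w; x] :&: V = [set w] /\ [set w; x] :&: ~: V = [set x].
Proof.
move=> wV xV; split; apply/setP => z; rewrite !inE.
  case: (eqVneq z w) => [->|_]; first by rewrite wV.
  by case: eqVneq => // ->; rewrite (negbTE xV).
case: (eqVneq z x) => [->|_]; first by rewrite xV orbT.
by rewrite orbF; case: eqVneq => // ->; rewrite wV.
Qed.

Lemma card_cross_edges V E :
  #|cross_edges V (~: V) :&: E| = \sum_(w in V) #|~: V :&: nbhd E w|.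
Proof.
pose S := [set p : T * T | [&& p.1 \in V, p.2 \notin V & [set p.1; p.2] \in E]].
have -> : cross_edges V (~: V) :&: E = (fun p => [set p.1; p.2]) @: S.
  apply/setP => e; rewrite !inE; apply/andP/imsetP => [[]|[[w x]]].
    move=> /and3P [_ /cards1P [w eV] /cards1P [x eX]] eE.
    have /setIP [_ wV] : w \in e :&: V by rewrite eV set11.
    have /setIP [_ /[!inE] xV] : x \in e :&: ~: V by rewrite eX set11.
    have ee : e = [set w; x] by rewrite -(setID e V) setDE eV eX.
    by exists (w, x); [rewrite inE -ee; apply/and3P | rewrite ee].
  rewrite inE /= => /and3P [wV xV wxE] ->; have [-> ->] := set2_cross wV xV.
  by split=> //; rewrite !cards1 cards2; case: (eqVneq w x) xV => // <-; rewrite wV.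
rewrite card_in_imset; last first.
  move=> [w x] [w' x'] /[!inE] /= /and3P [wV xV _] /and3P [w'V x'V _] wx_eq.
  have [c1 c2] := set2_cross wV xV; have [c1' c2'] := set2_cross w'V x'V.
  rewrite wx_eq in c1 c2.
  by rewrite (set1_inj (etrans (esym c1) c1')) (set1_inj (etrans (esym c2) c2')).
rewrite -sum1_card.
transitivity (\sum_(w in V) \sum_(x in ~: V :&: nbhd E w) 1); last first.
  by apply: eq_bigr => w _; rewrite sum1_card.
by rewrite pair_big_dep /=; apply: eq_bigl => -[w x]; rewrite !inE /= andbA.
Qed.
End CrossEdges.

Lemma exists_sum_ltn (I : finType) (A : {pred I}) (F G : I -> nat) :
  \sum_(i in A) F i < \sum_(i in A) G i -> exists2 i, i \in A & F i < G i.
Proof.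
move=> lt; apply/exists_inP; apply: contraTT lt => /exists_inPn FG.
by rewrite -leqNgt; apply: leq_sum => i /FG; rewrite -leqNgt.
Qed.

Section DistinctPairs.
Variable T : finType.
Implicit Types A B X : {set T}.

Lemma exists_distinct_pair A B :
  0 < #|A| -> 0 < #|B| -> 2 < #|A| + #|B| -> exists x y, [/\ x \in A, y \in B & x != y].
Proof.
move=> /card_gt0P [a aA] /card_gt0P [b bB] AB.
have [ab|] := eqVneq a b; last by exists a, b.
rewrite -{}ab in bB; have [A2 | A1] := ltnP 1 #|A|.
  have /card_gt0P [x /setD1P [xa xA]] : 0 < #|A :\ a| by move: A2; rewrite (cardsD1 a) aA.
  by exists x, a.
have /card_gt0P [y /setD1P [ya yB]] : 0 < #|B :\ a|.
  by move: AB; rewrite (cardsD1 a B) bB; lia.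
by exists a, y; rewrite eq_sym.
Qed.

Lemma exists_distinct_pair_of_card X (Au Av Cu Cv : {set T}) :
  1 < #|X| -> Au \subset X :\: Cu -> Av \subset X :\: Cv ->
  #|X :&: Cu| + #|X :&: Cv| < #|Au| + #|Av| ->
  (exists x y, [/\ x \in Au, y \in X :\: Cv & x != y]) \/
  (exists x y, [/\ x \in Av, y \in X :\: Cu & x != y]).
Proof.
move=> X2 /subset_leq_card sAu /subset_leq_card sAv lt.
move: (cardsID Cu X) (cardsID Cv X) => cu cv.
have [/and3P [Au0 Cv0 AuCv] | ] :=
  boolP [&& 0 < #|Au|, 0 < #|X :\: Cv| & 2 < #|Au| + #|X :\: Cv|].
  by left; apply: exists_distinct_pair.
by rewrite !negb_and -!leqNgt => small; right; apply: exists_distinct_pair; lia.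
Qed.
End DistinctPairs.

Theorem lemma12 (T : finType) (E0 E1 E2 M : {set {set T}}) :
  ordered_partition E0 E1 E2 ->
  is_matching M -> M \subset E0 ->
  #|M| < #|T|./2 ->
  let X := ~: Vm M in
  (induced_edges X :&: (E0 :|: E1) != set0 ->
     exists M' : {set {set T}}, good_matching E1 E2 M' /\ #|M'| = #|M|.+1) /\
  (#|cross_edges (Vm M) X :&: E0| > #|cross_edges (Vm M) X :&: E2| ->
     exists M' : {set {set T}}, good_matching E1 E2 M' /\ #|M'| = #|M|.+1).
Proof.
move=> [_ D01 D02 D12] HM ME0 small X; split.
  case/set0Pn => e /setIP [/setIdP [eK eX] eE].
  apply: (augment_by_free_edge (e := e) D01 D02 HM ME0).
  - by move: eK; rewrite inE => /eqP.
  - by rewrite disjoints_subset.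
  - by case/setUP: eE => [/(disjointFr D02) | /(disjointFr D12)] ->.
have X2 : 1 < #|X|.
  move: small (cardsC (Vm M)); rewrite gtn_half_double /Vm card_cover_matching //.
  by rewrite -/X; lia.
have tM : trivIset M by move: HM; rewrite is_matchingE => /andP [].
have sub w : X :&: nbhd E0 w \subset X :\: nbhd E2 w.
  apply/subsetP => x /setIP [xX]; rewrite in_setD xX andbT !in_nbhd.
  by move=> /(disjointFr D02) ->.
have swap a b : [set a; b] \in M ->
    (exists x y, [/\ x \in X :&: nbhd E0 a, y \in X :\: nbhd E2 b & x != y]) ->
    exists M' : {set {set T}}, good_matching E1 E2 M' /\ #|M'| = #|M|.+1.
  move=> abM [x [y [/setIP [xX xE0] /setDP [yX yE2] xy]]].
  rewrite !in_nbhd !inE in xE0 yE2 xX yX.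
  exact: (augment_by_swap D01 D02 HM ME0 abM xX yX xy xE0 yE2).
rewrite /X /Vm !card_cross_edges !(big_trivIset _ tM) => /exists_sum_ltn [m mM].
have /cards2P [u [v [uv muv]]] : #|m| == 2 by rewrite (matching_edge_card HM mM).
rewrite muv !big_setU1 ?big_set1 ?inE //= in mM * => lt.
case: (exists_distinct_pair_of_card X2 (sub u) (sub v) lt); first exact: swap.
by apply: swap; rewrite setUC.
Qed.
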